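(* Let $p,q$ be positive integers and let $T_1$ be the least period of the Cat map over $\mathbb{Z}_2$. Then $G_{T_1}$ is even and $$\tfrac12 G_{T_1}-1=\begin{cases}\frac12 pq(pq+3)^2 & \text{if } p \text{ and } q \text{ are odd};\\ pq\left(\frac12 pq+2\right) & \text{if exactly one of } p,q \text{ is odd};\\ \frac12 pq & \text{if } p \text{ and } q \text{ are even}.\end{cases}$$
   Context: $\mathbf{C}=\begin{bmatrix}1 & p\\ q & 1+pq\end{bmatrix}$; the Cat map over $\mathbb{Z}_N$ is $v\mapsto\mathbf{C}v\bmod N$ on $\mathbb{Z}_N^2$, and its least period is the least $n\ge1$ with $\mathbf{C}^nv\equiv v\pmod N$ for all $v$. $A=pq+2$, $B=\sqrt{A^2-4}$, $G_n=\left(\frac{A+B}{2}\right)^n+\left(\frac{A-B}{2}\right)^n$. *)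

From HB Require Import structures.
From mathcomp Require Import all_boot all_order all_algebra.
Set Implicit Arguments. Unset Strict Implicit. Unset Printing Implicit Defensive.
Import Order.TTheory GRing.Theory Num.Theory.
Local Open Scope ring_scope.

Definition catmx (N p q : nat) : 'M['Z_N]_2 :=
  \matrix_(i < 2, j < 2)
    (if (val i == 0%N) && (val j == 0%N) then 1
     else if (val i == 0%N) then p%:R
     else if (val j == 0%N) then q%:R
     else (1 + p * q)%N%:R).

Definition cat_periodic (N p q n : nat) : Prop :=
  forall v : 'cV['Z_N]_2, (catmx N p q) ^+ n *m v = v.

Definition cat_least_period (N p q n : nat) : Prop :=
  (0 < n)%N /\ cat_periodic N p q n /\
  forall m : nat, (0 < m)%N -> cat_periodic N p q m -> (n <= m)%N.

Definition catA (R : rcfType) (p q : nat) : R := (p * q + 2)%N%:R.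
Definition catB (R : rcfType) (p q : nat) : R := Num.sqrt (catA R p q ^+ 2 - 4).
Definition catG (R : rcfType) (p q n : nat) : R :=
  ((catA R p q + catB R p q) / 2) ^+ n + ((catA R p q - catB R p q) / 2) ^+ n.

From Pilot Require Import Defs.
From HB Require Import structures.
From mathcomp Require Import all_boot all_order all_algebra.
From mathcomp Require Import ring.
Import Order.TTheory GRing.Theory Num.Theory.
Set Implicit Arguments. Unset Strict Implicit. Unset Printing Implicit Defensive.
Local Open Scope ring_scope.

(* Modulo 2 the Cat matrix depends only on the parities of p and q: it is
   [[1,1],[1,0]], of order 3, when both are odd, a transvection, of order 2,
   when exactly one is odd, and the identity when both are even.  The numbers
   G_n are the power sums of the two roots of x^2 - A x + 1, so
   G_(n+2) = A G_(n+1) - G_n, which gives G_1 = pq + 2, G_2 = pq(pq + 4) + 2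
   and G_3 = pq(pq + 3)^2 + 2; each is even in the case where it is needed. *)

Lemma mx_fixes_all_vectorsP (R : pzRingType) n (A : 'M[R]_n) :
  (forall v : 'cV_n, A *m v = v) <-> A = 1%:M.
Proof.
split=> [fixA | -> v]; last by rewrite mul1mx.
apply/matrixP => i j; have := congr1 (fun v : 'cV_n => v i 0) (fixA (delta_mx j 0)).
by rewrite -colE !mxE eqxx andbT.
Qed.

Lemma cat_periodicE N p q n : cat_periodic N p q n <-> catmx N p q ^+ n = 1.
Proof. exact: mx_fixes_all_vectorsP. Qed.

Lemma cat_least_period_eq N p q T n :
  cat_least_period N p q T -> (0 < n)%N -> cat_periodic N p q n ->
  (forall k, (0 < k < n)%N -> ~ cat_periodic N p q k) -> T = n.
Proof.
move=> [T_gt0 [perT minT]] n_gt0 pern nonper; apply/eqP.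
rewrite eqn_leq minT //= leqNgt; apply/negP => ltTn.
by apply: (nonper T) perT; rewrite T_gt0.
Qed.

Section Mx2.
Variable R : pzRingType.

Definition mx2 (a b c d : R) : 'M[R]_2 :=
  \matrix_(i, j) if i == 0 then if j == 0 then a else b
                 else if j == 0 then c else d.

Lemma mx2_mul a b c d a' b' c' d' :
  mx2 a b c d * mx2 a' b' c' d' =
  mx2 (a * a' + b * c') (a * b' + b * d') (c * a' + d * c') (c * b' + d * d').
Proof.
apply/matrixP => i j; rewrite !mxE !big_ord_recl big_ord0 !mxE addr0.
by case: i => [[|[|//]] ?]; case: j => [[|[|//]] ?].
Qed.

Lemma mx2_1 : 1 = mx2 1 0 0 1.
Proof.
apply/matrixP => i j; rewrite !mxE.
by case: i => [[|[|//]] ?]; case: j => [[|[|//]] ?].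
Qed.

Lemma mx2_eq a b c d a' b' c' d' :
  (mx2 a b c d == mx2 a' b' c' d') = [&& a == a', b == b', c == c' & d == d'].
Proof.
apply/eqP/and4P => [/matrixP eq_mx | [/eqP-> /eqP-> /eqP-> /eqP->] //].
by split; apply/eqP;
  [move: (eq_mx 0 0) | move: (eq_mx 0 1) | move: (eq_mx 1 0) | move: (eq_mx 1 1)];
  rewrite !mxE.
Qed.

Definition cat_mx (a b : R) := mx2 1 a b (1 + a * b).

End Mx2.

Lemma catmxE N p q : catmx N p q = cat_mx p%:R q%:R.
Proof.
apply/matrixP => i j; rewrite !mxE natrD natrM.
by case: i => [[|[|//]] ?]; case: j => [[|[|//]] ?].
Qed.

Lemma natr_Zp2 n : (n%:R : 'Z_2) = (odd n)%:R.
Proof. by rewrite -Zp_nat_mod // modn2. Qed.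

(* [rewrite !natr_Zp2] would loop: its right-hand side is again a cast of a nat. *)
Lemma catmx2E p q : catmx 2 p q = cat_mx (odd p)%:R (odd q)%:R.
Proof. by rewrite catmxE (natr_Zp2 p) (natr_Zp2 q). Qed.

Definition cat2_period (a b : bool) : nat :=
  if a && b then 3 else if a (+) b then 2 else 1.

Lemma cat2_order (a b : bool) (M := cat_mx a%:R b%:R : 'M['Z_2]_2) :
  M ^+ cat2_period a b = 1 /\
  forall k, (0 < k < cat2_period a b)%N -> M ^+ k != 1.
Proof.
rewrite {}/M /cat_mx; case: a; case: b; split=> [|[|[|[|//]]]] //; try apply/eqP;
  by rewrite ?exprS ?expr0 ?mulr1 ?mx2_mul mx2_1 mx2_eq.
Qed.

Lemma cat2_least_period p q T :
  cat_least_period 2 p q T -> T = cat2_period (odd p) (odd q).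
Proof.
move=> leastT; have [per nonper] := cat2_order (odd p) (odd q).
apply: cat_least_period_eq leastT _ _ _.
- by rewrite /cat2_period; case: (odd p); case: (odd q).
- by apply/cat_periodicE; rewrite catmx2E.
- by move=> k /nonper; rewrite -catmx2E => /eqP nonperk /cat_periodicE.
Qed.

Lemma expr_sum_rec (R : comPzRingType) (x y : R) n :
  x ^+ n.+2 + y ^+ n.+2 =
  (x + y) * (x ^+ n.+1 + y ^+ n.+1) - x * y * (x ^+ n + y ^+ n).
Proof. by rewrite !exprS; ring. Qed.

Section CatG.
Variables (R : rcfType) (p q : nat).
Local Notation A := (Defs.catA R p q).
Local Notation B := (catB R p q).
Local Notation G := (catG R p q).

Lemma catB_sqr : B ^+ 2 = A ^+ 2 - 4.
Proof.
rewrite sqr_sqrtr // subr_ge0 /Defs.catA -natrX ler_nat.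
by rewrite (leq_trans (_ : 3 < 2 ^ 2)%N) // leq_exp2r // leq_addl.
Qed.

Lemma catG0 : G 0 = 2.
Proof. by rewrite /catG !expr0. Qed.

Lemma catG1E : G 1 = (p * q + 2)%:R.
Proof. by rewrite /catG /Defs.catA !expr1; field. Qed.

Lemma catG_rec n : G n.+2 = A * G n.+1 - G n.
Proof.
have sumA : (A + B) / 2 + (A - B) / 2 = A by field.
have prod1 : (A + B) / 2 * ((A - B) / 2) = 1 by field: catB_sqr.
by rewrite /catG expr_sum_rec sumA prod1 mul1r.
Qed.

Lemma catG2E : G 2 = (p * q * (p * q + 4) + 2)%:R.
Proof. by rewrite catG_rec catG1E catG0 /Defs.catA !(natrD, natrM); ring. Qed.

Lemma catG3E : G 3 = (p * q * (p * q + 3) ^ 2 + 2)%:R.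
Proof.
by rewrite catG_rec catG2E catG1E /Defs.catA !(natrD, natrM, natrX); ring.
Qed.

End CatG.

Lemma natr_even (R : pzRingType) n :
  ~~ odd n -> exists k : int, n%:R = (2 * k)%:~R :> R.
Proof. by move=> n_even; exists (n./2)%:Z; rewrite -PoszM mul2n even_halfK. Qed.

Theorem proposition4 (R : rcfType) (p q T1 : nat) :
  (0 < p)%N -> (0 < q)%N -> cat_least_period 2 p q T1 ->
  (exists k : int, catG R p q T1 = (2 * k)%:~R) /\
  catG R p q T1 / 2 - 1 =
    (if odd p && odd q then
       (p * q)%N%:R * ((p * q)%N%:R + 3) ^+ 2 / 2
     else if odd p (+) odd q then
       (p * q)%N%:R * ((p * q)%N%:R / 2 + 2)
     else (p * q)%N%:R / 2).
Proof.
move=> _ _ /cat2_least_period ->; rewrite /cat2_period.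
case hp: (odd p); case hq: (odd q); rewrite /= ?catG1E ?catG2E ?catG3E.
all: split; first by apply: natr_even; rewrite !(oddD, oddM, oddX) hp hq.
all: by rewrite !(natrD, natrM, natrX); field.
Qed.
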